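(* Let $\Sigma$ be a compact oriented surface with boundary components $\gamma_1,\dots,\gamma_n$ and $\chi(\Sigma)<0$, with a hyperbolic metric $d$ with geodesic boundary, a weight $\mathbf{r}\in\mathbb{R}^n_{>0}$ and a truncated triangulation $\mathcal{T}$. For a truncated hinge $\Diamond_{ij;kl}$ (edge $e_{ij}$ with faces $f_{ijk},f_{ijl}$), put $p=r_k,q=r_i,r=r_l,s=r_j$ and $a=\cosh l_{ki}$, $b=\cosh l_{il}$, $c=\cosh l_{lj}$, $d=\cosh l_{jk}$, $e=\cosh l_{ij}$, where $l_{\alpha\beta}$ is the length coordinate of $[d]$ at $e_{\alpha\beta}$. Then $e_{ij}$ is local weighted Delaunay if and only if \[\frac{\sqrt{\Delta_{bce}}}{p}+\frac{\sqrt{\Delta_{ade}}}{r}\le\frac{\sqrt{\Delta_{cdf}}}{q}+\frac{\sqrt{\Delta_{abf}}}{s},\] where $\Delta_{xyz}=x^2+y^2+z^2+2xyz-1$ and $f=\frac{ab+cd+ace+bde+\sqrt{\Delta_{ade}}\sqrt{\Delta_{bce}}}{e^2-1}$.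
   Context: Gluing open disks $D_i$ to the boundary components $\gamma_i$ and choosing $v_i\in D_i$ gives a marked surface $(S,V)$; a truncated triangulation of $\Sigma$ is the intersection with $\Sigma$ of a triangulation of $(S,V)$ (a $\Delta$-complex decomposition with $0$-cells $V$); each face becomes a truncated triangle (right-angled hexagon after straightening). For each edge, the truncated arc is isotopic to a unique geodesic orthogonal to $\partial\Sigma$, whose length is the length coordinate. For a truncated face $f_{ijk}$, lifted to $\mathbb{H}^2$, $O_{ijk}$ denotes the point satisfying $r_i\sinh d(O_{ijk},\gamma_i)=r_j\sinh d(O_{ijk},\gamma_j)=r_k\sinh d(O_{ijk},\gamma_k)$, and $h_{ij,k}$ is the hyperbolic distance from $O_{ijk}$ to the geodesic edge $e_{ij}$, positive if $O_{ijk}$ lies on the same side of $e_{ij}$ as $f_{ijk}$ and negative otherwise. The edge $e_{ij}$ is local weighted Delaunay if $h_{ij,k}+h_{ij,l}\ge0$. *)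

(* Hyperbolic plane in the hyperboloid (Minkowski) model:
   R^{2,1} with <x,y> = x1 y1 + x2 y2 - x3 y3,
   H^2 = { x | <x,x> = -1, x3 > 0 },
   a geodesic line is { x in H^2 | <x,n> = 0 } for a unit spacelike normal n
   (<n,n> = 1); the normal n also orients the line: its "positive side" is
   { x | <x,n> > 0 }. *)
From Stdlib Require Import Reals.
Open Scope R_scope.

Record pt := Pt { px : R; py : R; pz : R }.

Definition mink (x y : pt) : R := px x * px y + py x * py y - pz x * pz y.

Definition popp (x : pt) : pt := Pt (- px x) (- py x) (- pz x).

Definition H2 (x : pt) : Prop := mink x x = -1 /\ 0 < pz x.

Definition unit_spacelike (n : pt) : Prop := mink n n = 1.

Definition on_geod (n x : pt) : Prop := H2 x /\ mink x n = 0.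

Definition arccosh (c : R) : R := ln (c + sqrt (c ^ 2 - 1)).
Definition hdist (x y : pt) : R := arccosh (- mink x y).

Definition geod_perp (m n : pt) : Prop := mink m n = 0.

Definition dist_to_geod (x n : pt) (d : R) : Prop :=
  (exists y, on_geod n y /\ hdist x y = d) /\
  (forall y, on_geod n y -> d <= hdist x y).

Definition signed_dist (x n : pt) (s : R) : Prop :=
  exists d, dist_to_geod x n d /\
    s = (if Rle_dec 0 (mink x n) then d else - d).

Definition perp_length (n1 n2 : pt) (l : R) : Prop :=
  exists P Q mm : pt,
    on_geod n1 P /\ on_geod n2 Q /\ unit_spacelike mm /\
    on_geod mm P /\ on_geod mm Q /\ geod_perp mm n1 /\ geod_perp mm n2 /\
    l = hdist P Q.

(* A lifted truncated triangle f_ijk: three boundary geodesic lines gamma_i,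
   gamma_j, gamma_k (normals oriented towards the face, i.e. the face lies in
   { <.,n_a> >= 0 } for a = i,j,k), pairwise disjoint and each lying strictly
   on the face side of the two others.  The face is then the right-angled
   hexagon bounded by these three lines and their common perpendiculars. *)
Definition trunc_face (ni nj nk : pt) : Prop :=
  unit_spacelike ni /\ unit_spacelike nj /\ unit_spacelike nk /\
  (forall x, on_geod nj x -> 0 < mink x ni) /\
  (forall x, on_geod nk x -> 0 < mink x ni) /\
  (forall x, on_geod ni x -> 0 < mink x nj) /\
  (forall x, on_geod nk x -> 0 < mink x nj) /\
  (forall x, on_geod ni x -> 0 < mink x nk) /\
  (forall x, on_geod nj x -> 0 < mink x nk).

(* A lifted truncated hinge Diamond_{ij;kl}: faces f_ijk and f_ijl sharing the
   edge e_ij, whose geodesic line (normal m) is the common perpendicular of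
   gamma_i and gamma_j; m is oriented towards f_ijk (gamma_k on its positive
   side) and f_ijl lies on the other side (gamma_l on its negative side). *)
Definition trunc_hinge (ni nj nk nl m : pt) : Prop :=
  trunc_face ni nj nk /\ trunc_face ni nj nl /\
  unit_spacelike m /\ geod_perp m ni /\ geod_perp m nj /\
  (forall x, on_geod nk x -> 0 < mink x m) /\
  (forall x, on_geod nl x -> mink x m < 0).

Definition weighted_center (O ni nj nk : pt) (ri rj rk : R) : Prop :=
  H2 O /\ exists di dj dk : R,
    signed_dist O ni di /\ signed_dist O nj dj /\ signed_dist O nk dk /\
    ri * sinh di = rj * sinh dj /\ rj * sinh dj = rk * sinh dk.

(* e_ij is local weighted Delaunay: h_{ij,k} + h_{ij,l} >= 0, where h_{ij,k}
   (resp. h_{ij,l}) is the signed distance from O_ijk (resp. O_ijl) to the line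
   e_ij, positive on the side of f_ijk (resp. f_ijl). *)
Definition local_weighted_delaunay (m Ok Ol : pt) : Prop :=
  exists hk hl : R,
    signed_dist Ok m hk /\ signed_dist Ol (popp m) hl /\ 0 <= hk + hl.

Definition DeltaXYZ (x y z : R) : R := x ^ 2 + y ^ 2 + z ^ 2 + 2 * x * y * z - 1.

From Stdlib Require Import Reals Lra Psatz.
Open Scope R_scope.

(* In the hyperboloid model the signed distance s from a point x to the line
   with unit normal n satisfies sinh s = <x,n>.  So the weighted centre O of a
   face is characterised by r_i <O,n_i> = r_j <O,n_j> = r_3 <O,n_3> =: t > 0, and
   the Delaunay condition h_ij,k + h_ij,l >= 0 reads <O_l,m> <= <O_k,m> for the
   normal m of e_ij.  Expanding in the frame (n_i, n_j, m), whose Gram matrix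
   only involves e = cosh l_ij, gives <O,m> = t X with X explicit and
   t^2 (kappa - X^2) = 1; thus <O,m> increases with X and the condition becomes
   X_k + X_l >= 0.  Since (e^2 - 1) <n_k,m>^2 = Delta_ade and
   (e^2 - 1) <n_l,m>^2 = Delta_bce, and sqrt Delta_cdf, sqrt Delta_abf are linear
   combinations of sqrt Delta_ade and sqrt Delta_bce, this is the stated
   inequality. *)

Lemma mink_sym x y : mink x y = mink y x.
Proof. unfold mink; ring. Qed.

Lemma mink_popp_l x y : mink (popp x) y = - mink x y.
Proof. destruct x, y; unfold mink, popp; simpl; ring. Qed.

Lemma mink_popp_r x y : mink x (popp y) = - mink x y.
Proof. rewrite mink_sym, mink_popp_l, mink_sym; reflexivity. Qed.

Lemma unit_spacelike_popp n : unit_spacelike n -> unit_spacelike (popp n).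
Proof. unfold unit_spacelike; rewrite mink_popp_l, mink_popp_r; lra. Qed.

Definition pcomb (a : R) (x : pt) (b : R) (y : pt) : pt :=
  Pt (a * px x + b * px y) (a * py x + b * py y) (a * pz x + b * pz y).

Lemma mink_pcomb_l a x b y z : mink (pcomb a x b y) z = a * mink x z + b * mink y z.
Proof. destruct x, y, z; unfold mink, pcomb; simpl; ring. Qed.

Lemma mink_pcomb_r a x b y z : mink z (pcomb a x b y) = a * mink z x + b * mink z y.
Proof. rewrite mink_sym, mink_pcomb_l, !(mink_sym z); reflexivity. Qed.

(* Cramer's rule for the Gram matrix of u1 u2 u3: its determinant times <x,y>
   is the adjugate form evaluated on the coordinates <x,ui>, <y,ui>. *)
Lemma mink_adjugate_expansion (u1 u2 u3 x y : pt) :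
  let g11 := mink u1 u1 in let g22 := mink u2 u2 in let g33 := mink u3 u3 in
  let g12 := mink u1 u2 in let g13 := mink u1 u3 in let g23 := mink u2 u3 in
  let p1 := mink x u1 in let p2 := mink x u2 in let p3 := mink x u3 in
  let q1 := mink y u1 in let q2 := mink y u2 in let q3 := mink y u3 in
  let A11 := g22 * g33 - g23 ^ 2 in let A22 := g11 * g33 - g13 ^ 2 in
  let A33 := g11 * g22 - g12 ^ 2 in let A12 := g13 * g23 - g12 * g33 in
  let A13 := g12 * g23 - g13 * g22 in let A23 := g12 * g13 - g11 * g23 in
  (g11 * A11 + g12 * A12 + g13 * A13) * mink x y
  = A11 * p1 * q1 + A22 * p2 * q2 + A33 * p3 * q3 + A12 * (p1 * q2 + p2 * q1)
    + A13 * (p1 * q3 + p3 * q1) + A23 * (p2 * q3 + p3 * q2).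
Proof. destruct u1, u2, u3, x, y; unfold mink; simpl; ring. Qed.

Lemma mink_expansion_orth u1 u2 u3 x y g11 g12 g22 g33 :
  mink u1 u1 = g11 -> mink u1 u2 = g12 -> mink u2 u2 = g22 -> mink u3 u3 = g33 ->
  mink u1 u3 = 0 -> mink u2 u3 = 0 ->
  g33 * (g11 * g22 - g12 ^ 2) * mink x y =
  g33 * g22 * mink x u1 * mink y u1 + g33 * g11 * mink x u2 * mink y u2
  + (g11 * g22 - g12 ^ 2) * mink x u3 * mink y u3
  - g12 * g33 * (mink x u1 * mink y u2 + mink x u2 * mink y u1).
Proof.
  intros h11 h12 h22 h33 h13 h23.
  pose proof (mink_adjugate_expansion u1 u2 u3 x y) as G; cbv zeta in G.
  rewrite h11, h12, h22, h33, h13, h23 in G.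
  replace (g33 * (g11 * g22 - g12 ^ 2))
    with (g11 * (g22 * g33 - 0 ^ 2) + g12 * (0 * 0 - g12 * g33) + 0 * (g12 * 0 - 0 * g22))
    by ring.
  rewrite G; ring.
Qed.

Lemma H2_mink_le x y : H2 x -> H2 y -> mink x y <= -1.
Proof.
  destruct x as [x1 x2 x3], y as [y1 y2 y3]; unfold H2, mink; simpl.
  intros [hx x3_pos] [hy y3_pos].
  assert (lagrange : (x3 * y3) ^ 2 - (1 + (x1 * y1 + x2 * y2)) ^ 2
                     = (x1 - y1) ^ 2 + (x2 - y2) ^ 2 + (x1 * y2 - x2 * y1) ^ 2).
  { replace ((x3 * y3) ^ 2) with (x3 ^ 2 * y3 ^ 2) by ring.
    replace (x3 ^ 2) with (1 + x1 ^ 2 + x2 ^ 2) by lra.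
    replace (y3 ^ 2) with (1 + y1 ^ 2 + y2 ^ 2) by lra. ring. }
  assert (1 + (x1 * y1 + x2 * y2) <= x3 * y3).
  { apply Rsqr_incr_0_var; rewrite ?Rsqr_pow2.
    - pose proof (pow2_ge_0 (x1 - y1)); pose proof (pow2_ge_0 (x2 - y2));
        pose proof (pow2_ge_0 (x1 * y2 - x2 * y1)); lra.
    - apply Rlt_le, Rmult_lt_0_compat; assumption. }
  lra.
Qed.

Lemma mink_reverse_cauchy_schwarz z y :
  mink y y < 0 -> mink z z * mink y y <= mink z y ^ 2.
Proof.
  destruct z as [z1 z2 z3], y as [y1 y2 y3]; unfold mink; simpl; intros hy.
  set (w1 := y3 * z1 - z3 * y1); set (w2 := y3 * z2 - z3 * y2).
  set (D := (z1 * y1 + z2 * y2 - z3 * y3) ^ 2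
            - (z1 * z1 + z2 * z2 - z3 * z3) * (y1 * y1 + y2 * y2 - y3 * y3)).
  assert (key : y3 ^ 2 * D
                = (w1 ^ 2 + w2 ^ 2) * (y3 ^ 2 - y1 ^ 2 - y2 ^ 2) + (w1 * y1 + w2 * y2) ^ 2)
    by (unfold D, w1, w2; ring).
  assert (0 < y3 ^ 2) by nra.
  assert (0 <= (w1 ^ 2 + w2 ^ 2) * (y3 ^ 2 - y1 ^ 2 - y2 ^ 2)) by (apply Rmult_le_pos; nra).
  assert (0 <= D) by (pose proof (pow2_ge_0 (w1 * y1 + w2 * y2)); nra).
  unfold D in *; lra.
Qed.

Lemma H2_of_timelike x v : H2 x -> mink v v = -1 -> mink x v < 0 -> H2 v.
Proof.
  intros Hx Hv Hxv; split; [exact Hv|].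
  destruct (Rtotal_order 0 (pz v)) as [h | [h | h]]; [exact h | exfalso ..].
  - destruct v as [v1 v2 v3]; unfold mink in Hv; simpl in *; subst; nra.
  - assert (Hw : H2 (popp v)).
    { split; [rewrite mink_popp_l, mink_popp_r; lra | destruct v; simpl in *; lra]. }
    pose proof (H2_mink_le x (popp v) Hx Hw); rewrite mink_popp_r in *; lra.
Qed.

Lemma H2_positive_comb x y a b : H2 x -> H2 y -> 0 < a -> 0 <= b ->
  exists z k, H2 z /\ 0 < k /\ forall n, mink z n = k * (a * mink x n + b * mink y n).
Proof.
  intros Hx Hy ha hb.
  pose proof (H2_mink_le x y Hx Hy) as Ixy.
  destruct Hx as [Hxx Hxz], Hy as [Hyy Hyz].
  set (v := pcomb a x b y).
  assert (Hvv : mink v v <= - a ^ 2).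
  { unfold v; rewrite !mink_pcomb_l, !mink_pcomb_r, Hxx, Hyy, (mink_sym y x).
    assert (0 <= a * b) by nra. assert (0 <= b * b) by nra. nra. }
  set (N := sqrt (- mink v v)).
  assert (NN : N * N = - mink v v) by (apply sqrt_sqrt; nra).
  assert (N_pos : 0 < N) by (apply sqrt_lt_R0; nra).
  exists (pcomb (a / N) x (b / N) y), (/ N).
  assert (Hz : forall n, mink (pcomb (a / N) x (b / N) y) n = / N * (a * mink x n + b * mink y n))
    by (intro n; rewrite mink_pcomb_l; field; lra).
  split; [split | split; [apply Rinv_0_lt_compat; exact N_pos | exact Hz]].
  - replace (mink _ _) with (mink v v / (N * N))
      by (unfold v; rewrite !mink_pcomb_l, !mink_pcomb_r; field; lra).
    rewrite NN; field; nra.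
  - simpl. assert (0 < a / N) by (apply Rdiv_lt_0_compat; lra).
    assert (0 <= b / N) by (apply Rmult_le_pos; [lra | left; apply Rinv_0_lt_compat; lra]).
    nra.
Qed.

Lemma sinh_opp x : sinh (- x) = - sinh x.
Proof. unfold sinh; rewrite Ropp_involutive; field. Qed.

Lemma sinh_le_iff x y : sinh x <= sinh y <-> x <= y.
Proof.
  split; intro h.
  - rewrite <- (arcsinh_sinh x), <- (arcsinh_sinh y); apply arcsinh_le, h.
  - destruct (Rle_lt_or_eq_dec x y h) as [lt | ->]; [left; apply sinh_lt, lt | lra].
Qed.

Lemma arccosh_arcsinh c : 1 <= c -> arccosh c = arcsinh (sqrt (c ^ 2 - 1)).
Proof.
  intro hc; unfold arccosh, arcsinh.
  rewrite pow2_sqrt by nra.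
  replace (c ^ 2 - 1 + 1) with (c ^ 2) by ring.
  rewrite (sqrt_pow2 c) by lra.
  f_equal; ring.
Qed.

Lemma arccosh_le c1 c2 : 1 <= c1 -> c1 <= c2 -> arccosh c1 <= arccosh c2.
Proof.
  intros h1 h2; rewrite !arccosh_arcsinh by lra.
  apply arcsinh_le, sqrt_le_1_alt; nra.
Qed.

Lemma cosh_arccosh c : 1 <= c -> cosh (arccosh c) = c.
Proof.
  intro hc; unfold cosh, arccosh.
  set (s := sqrt (c ^ 2 - 1)).
  assert (ss : s * s = c ^ 2 - 1) by (apply sqrt_sqrt; nra).
  assert (0 <= s) by apply sqrt_pos.
  rewrite exp_Ropp, exp_ln by nra.
  field_simplify_eq; nra.
Qed.

Lemma sqrt_1_plus_sq_ge1 t : 1 <= sqrt (1 + t ^ 2).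
Proof. rewrite <- sqrt_1 at 1; apply sqrt_le_1_alt; nra. Qed.

Lemma arccosh_sqrt_1_plus_sq t : arccosh (sqrt (1 + t ^ 2)) = arcsinh (Rabs t).
Proof.
  rewrite arccosh_arcsinh by apply sqrt_1_plus_sq_ge1.
  rewrite pow2_sqrt by nra.
  replace (1 + t ^ 2 - 1) with (Rsqr t) by (rewrite Rsqr_pow2; ring).
  rewrite sqrt_Rsqr_abs; reflexivity.
Qed.

(* The foot of the perpendicular from x to the line n is x - <x,n> n, normalised. *)
Lemma foot_point x n : H2 x -> unit_spacelike n ->
  exists y, on_geod n y /\ - mink x y = sqrt (1 + mink x n ^ 2).
Proof.
  intros Hx Hn; pose proof Hx as [Hxx _]; unfold unit_spacelike in Hn.
  set (t := mink x n); set (c := sqrt (1 + t ^ 2)).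
  assert (cc : c * c = 1 + t ^ 2) by (apply sqrt_sqrt; nra).
  pose proof (sqrt_1_plus_sq_ge1 t) as c_ge1; fold c in c_ge1.
  exists (pcomb (1 / c) x (- t / c) n).
  assert (Exy : mink x (pcomb (1 / c) x (- t / c) n) = - c).
  { rewrite mink_pcomb_r, Hxx; fold t; field_simplify_eq; nra. }
  split; [split | lra].
  - apply (H2_of_timelike x); [exact Hx | | lra].
    rewrite !mink_pcomb_l, !mink_pcomb_r, Hxx, Hn, (mink_sym n x); fold t.
    field_simplify_eq; nra.
  - rewrite mink_pcomb_l, Hn; fold t; field; lra.
Qed.

Lemma on_geod_exists n : unit_spacelike n -> exists y, on_geod n y.
Proof.
  intro Hn.
  assert (H0 : H2 (Pt 0 0 1)) by (unfold H2, mink; simpl; split; lra).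
  destruct (foot_point _ n H0 Hn) as [y [Hy _]]; exists y; exact Hy.
Qed.

Lemma foot_point_min x n y : H2 x -> unit_spacelike n -> on_geod n y ->
  sqrt (1 + mink x n ^ 2) <= - mink x y.
Proof.
  intros Hx Hn [Hy Hyn]; set (t := mink x n).
  pose proof (H2_mink_le x y Hx Hy) as Ixy.
  pose proof (mink_reverse_cauchy_schwarz (pcomb 1 x (- t) n) y ltac:(destruct Hy; lra)) as CS.
  destruct Hx as [Hxx _], Hy as [Hyy _]; unfold unit_spacelike in Hn.
  rewrite !mink_pcomb_l, !mink_pcomb_r, Hxx, Hn, Hyy, (mink_sym n x), (mink_sym n y), Hyn
    in CS; fold t in CS.
  apply Rsqr_incr_0_var; [rewrite !Rsqr_pow2, pow2_sqrt by nra; nra | lra].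
Qed.

Lemma dist_to_geod_iff x n d : H2 x -> unit_spacelike n ->
  dist_to_geod x n d <-> d = arcsinh (Rabs (mink x n)).
Proof.
  intros Hx Hn; rewrite <- arccosh_sqrt_1_plus_sq.
  pose proof (sqrt_1_plus_sq_ge1 (mink x n)) as c_ge1.
  destruct (foot_point x n Hx Hn) as [y0 [Hy0 E0]].
  split.
  - intros [[y [Hy <-]] Hmin].
    specialize (Hmin y0 Hy0); unfold hdist in *; rewrite E0 in Hmin.
    pose proof (arccosh_le _ _ c_ge1 (foot_point_min x n y Hx Hn Hy)); lra.
  - intros ->; split.
    + exists y0; split; [exact Hy0 | unfold hdist; rewrite E0; reflexivity].
    + intros y Hy; apply arccosh_le; [exact c_ge1 | apply foot_point_min; assumption].
Qed.

Lemma signed_dist_iff x n s : H2 x -> unit_spacelike n ->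
  signed_dist x n s <-> sinh s = mink x n.
Proof.
  intros Hx Hn; unfold signed_dist; split.
  - intros [d [Hd ->]]; rewrite (dist_to_geod_iff x n d Hx Hn) in Hd; subst d.
    destruct (Rle_dec 0 (mink x n)).
    + rewrite Rabs_pos_eq, sinh_arcsinh by assumption; reflexivity.
    + rewrite Rabs_left, sinh_opp, sinh_arcsinh by lra; ring.
  - intro Hs; exists (arcsinh (Rabs (mink x n))).
    split; [apply dist_to_geod_iff; auto |].
    destruct (Rle_dec 0 (mink x n)).
    + rewrite Rabs_pos_eq, <- Hs, arcsinh_sinh by assumption; reflexivity.
    + rewrite Rabs_left, <- Hs, <- sinh_opp, arcsinh_sinh by lra; ring.
Qed.

Lemma local_weighted_delaunay_iff m Ok Ol : H2 Ok -> H2 Ol -> unit_spacelike m ->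
  local_weighted_delaunay m Ok Ol <-> mink Ol m <= mink Ok m.
Proof.
  intros HOk HOl Hm.
  assert (key : forall hk hl, sinh hk = mink Ok m -> sinh hl = - mink Ol m ->
                  0 <= hk + hl <-> mink Ol m <= mink Ok m).
  { intros hk hl Sk Sl.
    rewrite <- Sk; replace (mink Ol m) with (sinh (- hl)) by (rewrite sinh_opp; lra).
    rewrite sinh_le_iff; lra. }
  assert (Sl : forall hl, signed_dist Ol (popp m) hl <-> sinh hl = - mink Ol m).
  { intro hl; rewrite signed_dist_iff, mink_popp_r by auto using unit_spacelike_popp.
    reflexivity. }
  split.
  - intros (hk & hl & Hk & Hl & H0).
    rewrite signed_dist_iff in Hk by assumption; rewrite Sl in Hl.
    apply (key hk hl); assumption.
  - intro H0; exists (arcsinh (mink Ok m)), (arcsinh (- mink Ol m)).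
    rewrite signed_dist_iff, Sl, !sinh_arcsinh by assumption.
    split; [reflexivity | split; [reflexivity |]].
    apply key; [apply sinh_arcsinh .. | exact H0].
Qed.

Definition line_pos_side (n1 n2 : pt) : Prop := forall x, on_geod n2 x -> 0 < mink x n1.

Lemma perp_length_cosh n1 n2 l : unit_spacelike n1 -> unit_spacelike n2 ->
  line_pos_side n1 n2 -> line_pos_side n2 n1 -> perp_length n1 n2 l ->
  mink n1 n2 = - cosh l /\ 1 < cosh l.
Proof.
  intros U1 U2 S12 S21 (P & Q & mm & HP & HQ & Um & HPm & HQm & Pm1 & Pm2 & ->).
  assert (b_pos : 0 < mink Q n1) by (apply S12; exact HQ).
  assert (p_pos : 0 < mink P n2) by (apply S21; exact HP).
  destruct HP as [HP HPn1], HQ as [HQ HQn2], HPm as [_ HPmm], HQm as [_ HQmm].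
  pose proof (H2_mink_le P Q HP HQ) as IPQ.
  pose proof HP as [PP _]; pose proof HQ as [QQ _].
  unfold geod_perp, unit_spacelike in *.
  assert (G : forall x y, - mink x y = mink x P * mink y P - mink x n1 * mink y n1
                                       - mink x mm * mink y mm).
  { intros x y.
    pose proof (mink_expansion_orth P n1 mm x y (-1) 0 1 1 PP HPn1 U1 Um HPmm
                  ltac:(rewrite mink_sym; exact Pm1)) as G.
    lra. }
  pose proof (G Q Q) as GQQ; pose proof (G Q n2) as GQn; pose proof (G n2 n2) as Gnn.
  rewrite QQ, HQmm, (mink_sym Q P) in GQQ.
  rewrite HQn2, HQmm, (mink_sym Q P), (mink_sym n2 P), (mink_sym n2 n1) in GQn.
  rewrite U2, (mink_sym n2 mm), Pm2, (mink_sym n2 P), (mink_sym n2 n1) in Gnn.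
  set (q := mink P Q) in *; set (b := mink Q n1) in *;
    set (p := mink P n2) in *; set (g := mink n1 n2) in *.
  assert (bg : b * g = q * p) by lra.
  assert (b_eq_p : b = p).
  { assert (b * b * (g * g) = q * q * (p * p))
      by (replace (b * b * (g * g)) with ((b * g) * (b * g)) by ring; rewrite bg; ring).
    assert (b * b = p * p) by nra.
    nra. }
  assert (g = q) by (rewrite b_eq_p in bg; apply (Rmult_eq_reg_l p); lra).
  unfold hdist; fold q; rewrite cosh_arccosh by lra.
  split; nra.
Qed.

Lemma weighted_pair_pos O ni nj ri rj : unit_spacelike ni -> unit_spacelike nj ->
  line_pos_side ni nj -> line_pos_side nj ni -> H2 O -> 0 < ri -> 0 < rj ->
  ri * mink O ni = rj * mink O nj -> 0 < ri * mink O ni.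
Proof.
  intros Ui Uj Sij Sji HO hri hrj Heq.
  destruct (Rlt_or_le 0 (ri * mink O ni)) as [| t_nonpos]; [assumption | exfalso].
  destruct (on_geod_exists ni Ui) as [P [HP HPi]].
  assert (p_pos : 0 < mink P nj) by (apply Sji; split; assumption).
  (* the point of the segment [O,P] where it crosses the line nj *)
  destruct (H2_positive_comb O P (mink P nj) (- mink O nj) HO HP p_pos ltac:(nra))
    as (z & k & Hz & k_pos & Ez).
  assert (z_on_nj : on_geod nj z) by (split; [exact Hz | rewrite Ez; ring]).
  pose proof (Sij z z_on_nj) as z_pos.
  rewrite Ez, HPi in z_pos.
  assert (mink O ni <= 0) by nra.
  assert (mink P nj * mink O ni <= 0) by nra.
  nra.
Qed.

(* The ratio <O,m> / (r_i <O,n_i>) at the weighted centre O of a face of a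
   hinge with frame (n_i, n_j, m), where e = -<n_i,n_j>, x = -<n_3,n_i> and
   y = -<n_3,n_j> (see hinge_face_center). *)
Definition center_coord (e ri rj r3 x y : R) : R :=
  ((x + e * y) / ri + (y + e * x) / rj - (e ^ 2 - 1) / r3)
  / (sqrt (e ^ 2 - 1) * sqrt (DeltaXYZ x y e)).

Section HingeFrame.

Variables (ni nj m : pt) (e : R).
Hypotheses (Ui : unit_spacelike ni) (Uj : unit_spacelike nj) (Um : unit_spacelike m)
  (Eij : mink ni nj = - e) (e_gt1 : 1 < e) (Pmi : mink m ni = 0) (Pmj : mink m nj = 0).

Lemma hinge_expansion x y :
  (1 - e ^ 2) * mink x y
  = mink x ni * mink y ni + mink x nj * mink y nj + (1 - e ^ 2) * mink x m * mink y m
    + e * (mink x ni * mink y nj + mink x nj * mink y ni).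
Proof.
  pose proof (mink_expansion_orth ni nj m x y 1 (- e) 1 1 Ui Eij Uj Um
                ltac:(rewrite mink_sym; exact Pmi) ltac:(rewrite mink_sym; exact Pmj)).
  lra.
Qed.

Lemma hinge_normal_neg n3 : unit_spacelike n3 -> mink n3 ni < 0 -> mink n3 nj < 0 ->
  line_pos_side ni n3 -> line_pos_side nj n3 -> line_pos_side m n3 -> mink n3 m < 0.
Proof.
  intros U3 H3i H3j Si Sj Sm.
  destruct (on_geod_exists n3 U3) as [Q HQ].
  pose proof (Si Q HQ); pose proof (Sj Q HQ); pose proof (Sm Q HQ).
  pose proof (hinge_expansion Q n3) as G; destruct HQ as [_ HQ3]; rewrite HQ3 in G.
  assert (mink Q ni * mink n3 ni < 0) by nra.
  assert (mink Q nj * mink n3 nj < 0) by nra.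
  assert (mink Q ni * mink n3 nj < 0) by nra.
  assert (mink Q nj * mink n3 ni < 0) by nra.
  assert ((e ^ 2 - 1) * mink Q m * mink n3 m < 0) by nra.
  assert (0 < (e ^ 2 - 1) * mink Q m) by (apply Rmult_lt_0_compat; nra).
  nra.
Qed.

Lemma hinge_normal_sq n3 x y : unit_spacelike n3 -> mink n3 ni = - x -> mink n3 nj = - y ->
  (e ^ 2 - 1) * mink n3 m ^ 2 = DeltaXYZ x y e.
Proof.
  intros U3 H3i H3j; pose proof (hinge_expansion n3 n3) as G.
  rewrite U3, H3i, H3j in G; unfold DeltaXYZ; lra.
Qed.

Lemma hinge_center_normal O n3 x y t ri rj r3 :
  mink n3 ni = - x -> mink n3 nj = - y -> 0 < ri -> 0 < rj -> 0 < r3 ->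
  ri * mink O ni = t -> rj * mink O nj = t -> r3 * mink O n3 = t ->
  (e ^ 2 - 1) * mink n3 m * mink O m
  = t * ((e ^ 2 - 1) / r3 - (x + e * y) / ri - (y + e * x) / rj).
Proof.
  intros H3i H3j hri hrj hr3 Ti Tj T3; pose proof (hinge_expansion O n3) as G.
  replace (mink O ni) with (t / ri) in G by (rewrite <- Ti; field; lra).
  replace (mink O nj) with (t / rj) in G by (rewrite <- Tj; field; lra).
  replace (mink O n3) with (t / r3) in G by (rewrite <- T3; field; lra).
  rewrite H3i, H3j in G.
  unfold Rdiv in *; lra.
Qed.

Lemma hinge_center_norm O t ri rj : H2 O -> 0 < ri -> 0 < rj ->
  ri * mink O ni = t -> rj * mink O nj = t ->
  t ^ 2 * (/ ri ^ 2 + / rj ^ 2 + 2 * e / (ri * rj)) = (e ^ 2 - 1) * (1 + mink O m ^ 2).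
Proof.
  intros [HOO _] hri hrj Ti Tj; pose proof (hinge_expansion O O) as G.
  replace (mink O ni) with (t / ri) in G by (rewrite <- Ti; field; lra).
  replace (mink O nj) with (t / rj) in G by (rewrite <- Tj; field; lra).
  rewrite HOO in G.
  replace (t ^ 2 * (/ ri ^ 2 + / rj ^ 2 + 2 * e / (ri * rj)))
    with ((t / ri) ^ 2 + (t / rj) ^ 2 + 2 * e * (t / ri) * (t / rj)) by (field; lra).
  lra.
Qed.

Lemma hinge_face_center n3 O ri rj r3 x y :
  trunc_face ni nj n3 -> line_pos_side m n3 -> mink n3 ni = - x -> mink n3 nj = - y ->
  0 < x -> 0 < y -> 0 < ri -> 0 < rj -> 0 < r3 -> weighted_center O ni nj n3 ri rj r3 ->
  let X := center_coord e ri rj r3 x y in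
  exists t, 0 < t /\ mink O m = t * X /\
    t ^ 2 * ((/ ri ^ 2 + / rj ^ 2 + 2 * e / (ri * rj)) / (e ^ 2 - 1) - X ^ 2) = 1.
Proof.
  intros (_ & _ & U3 & Sij & Si3 & Sji & Sj3 & _ & _) Sm H3i H3j hx hy hri hrj hr3
    (HO & di & dj & d3 & Di & Dj & D3 & W1 & W2) X.
  rewrite signed_dist_iff in Di, Dj, D3 by assumption.
  rewrite Di, Dj in W1; rewrite Dj, D3 in W2.
  exists (ri * mink O ni).
  set (t := ri * mink O ni) in *; set (E := e ^ 2 - 1); set (mu := mink n3 m).
  assert (E_pos : 0 < E) by (unfold E; nra).
  assert (mu_neg : mu < 0) by (apply hinge_normal_neg; auto; lra).
  assert (normal_eq : E * mu * mink O m = t * (E / r3 - (x + e * y) / ri - (y + e * x) / rj))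
    by (apply hinge_center_normal; auto; lra).
  assert (norm_eq : t ^ 2 * (/ ri ^ 2 + / rj ^ 2 + 2 * e / (ri * rj)) = E * (1 + mink O m ^ 2))
    by (apply hinge_center_norm; auto).
  set (S := sqrt E).
  assert (SS : S * S = E) by (apply sqrt_sqrt; lra).
  assert (S_pos : 0 < S) by (apply sqrt_lt_R0; lra).
  assert (sqrt_Delta : sqrt (DeltaXYZ x y e) = - mu * S).
  { rewrite <- (hinge_normal_sq n3 x y U3 H3i H3j); fold E mu.
    rewrite <- (sqrt_pow2 (- mu * S)) by nra.
    f_equal; replace ((- mu * S) ^ 2) with (mu ^ 2 * (S * S)) by ring; rewrite SS; ring. }
  assert (Hg : mink O m = t * X).
  { unfold X, center_coord; fold E S; rewrite sqrt_Delta.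
    replace (S * (- mu * S)) with (- mu * E) by (rewrite <- SS; ring).
    apply (Rmult_eq_reg_l (E * mu)); [rewrite normal_eq; field |]; nra. }
  split; [apply (weighted_pair_pos O ni nj ri rj); assumption | split; [exact Hg |]].
  rewrite Hg in norm_eq.
  apply (Rmult_eq_reg_l E); [ | lra].
  replace (E * (t ^ 2 * ((/ ri ^ 2 + / rj ^ 2 + 2 * e / (ri * rj)) / E - X ^ 2)))
    with (t ^ 2 * (/ ri ^ 2 + / rj ^ 2 + 2 * e / (ri * rj)) - E * (t * X) ^ 2) by (field; lra).
  rewrite norm_eq; ring.
Qed.

End HingeFrame.

Lemma scaled_lt_scaled_nonneg t1 t2 X1 X2 k : 0 < t1 -> 0 < t2 ->
  t1 ^ 2 * (k - X1 ^ 2) = 1 -> t2 ^ 2 * (k - X2 ^ 2) = 1 -> 0 <= X1 -> X1 < X2 ->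
  t1 * X1 < t2 * X2.
Proof.
  intros ht1 ht2 N1 N2 hX1 hX12.
  assert (0 < k - X2 ^ 2) by nra.
  assert (t1 ^ 2 * (k - X2 ^ 2) < t1 ^ 2 * (k - X1 ^ 2)) by (apply Rmult_lt_compat_l; nra).
  assert (t1 ^ 2 < t2 ^ 2) by (apply (Rmult_lt_reg_r (k - X2 ^ 2)); lra).
  assert (t1 < t2) by nra.
  assert (t1 * X1 <= t1 * X2) by (apply Rmult_le_compat_l; lra).
  nra.
Qed.

Lemma scaled_lt_scaled t1 t2 X1 X2 k : 0 < t1 -> 0 < t2 ->
  t1 ^ 2 * (k - X1 ^ 2) = 1 -> t2 ^ 2 * (k - X2 ^ 2) = 1 -> X1 < X2 -> t1 * X1 < t2 * X2.
Proof.
  intros ht1 ht2 N1 N2 hX12.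
  destruct (Rle_or_lt 0 X1) as [hX1 | hX1].
  - apply (scaled_lt_scaled_nonneg t1 t2 X1 X2 k); assumption.
  - destruct (Rle_or_lt X2 0) as [hX2 | hX2]; [| nra].
    enough (t2 * - X2 < t1 * - X1) by lra.
    apply (scaled_lt_scaled_nonneg t2 t1 (- X2) (- X1) k); lra.
Qed.

Lemma scaled_le_scaled_iff t1 t2 X1 X2 k : 0 < t1 -> 0 < t2 ->
  t1 ^ 2 * (k - X1 ^ 2) = 1 -> t2 ^ 2 * (k - X2 ^ 2) = 1 ->
  t2 * X2 <= t1 * X1 <-> X2 <= X1.
Proof.
  intros ht1 ht2 N1 N2; split; intro h.
  - destruct (Rle_or_lt X2 X1) as [| lt]; [assumption |].
    pose proof (scaled_lt_scaled t1 t2 X1 X2 k ht1 ht2 N1 N2 lt); lra.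
  - destruct (Rle_lt_or_eq_dec X2 X1 h) as [lt | <-].
    + left; apply (scaled_lt_scaled t2 t1 X2 X1 k); assumption.
    + assert (0 < k - X2 ^ 2) by nra.
      assert (t1 ^ 2 = t2 ^ 2) by (apply (Rmult_eq_reg_r (k - X2 ^ 2)); lra).
      assert (t1 = t2) by (apply Rsqr_inj; [lra | lra | rewrite !Rsqr_pow2; assumption]).
      subst; lra.
Qed.

Lemma DeltaXYZ_comm x y z : DeltaXYZ x y z = DeltaXYZ y x z.
Proof. unfold DeltaXYZ; ring. Qed.

Lemma DeltaXYZ_pos x y z : 0 <= x -> 0 <= y -> 1 < z -> 0 < DeltaXYZ x y z.
Proof.
  intros hx hy hz; unfold DeltaXYZ.
  assert (0 <= x * y * z) by (apply Rmult_le_pos; [apply Rmult_le_pos |]; lra).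
  nra.
Qed.

Lemma sqrt_DeltaXYZ_flip a b c d e :
  0 <= a -> 0 <= b -> 0 <= c -> 0 <= d -> 1 < e ->
  let A := sqrt (DeltaXYZ a d e) in let B := sqrt (DeltaXYZ b c e) in
  sqrt (DeltaXYZ c d ((a * b + c * d + a * c * e + b * d * e + A * B) / (e ^ 2 - 1)))
  = (B * (a + e * d) + A * (b + e * c)) / (e ^ 2 - 1).
Proof.
  intros ha hb hc hd he A B.
  assert (AA : A ^ 2 = DeltaXYZ a d e)
    by (apply pow2_sqrt, Rlt_le, DeltaXYZ_pos; lra).
  assert (BB : B ^ 2 = DeltaXYZ b c e)
    by (apply pow2_sqrt, Rlt_le, DeltaXYZ_pos; lra).
  assert (0 <= A) by apply sqrt_pos. assert (0 <= B) by apply sqrt_pos.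
  set (E := e ^ 2 - 1); assert (E_pos : 0 < E) by (unfold E; nra).
  set (F := a * b + c * d + a * c * e + b * d * e + A * B).
  set (C := B * (a + e * d) + A * (b + e * c)).
  assert (key : E ^ 2 * (c ^ 2 + d ^ 2 - 1) + F ^ 2 + 2 * c * d * F * E - C ^ 2
                = (B ^ 2 - (b + e * c) ^ 2) * (A ^ 2 - DeltaXYZ a d e)
                  + (DeltaXYZ a d e - (a + e * d) ^ 2) * (B ^ 2 - DeltaXYZ b c e))
    by (unfold F, C, E, DeltaXYZ; ring).
  rewrite AA, BB in key.
  assert (0 <= C) by (unfold C; apply Rplus_le_le_0_compat; apply Rmult_le_pos; nra).
  rewrite <- (sqrt_pow2 (C / E)) by (apply Rmult_le_pos; [lra | left; apply Rinv_0_lt_compat; lra]).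
  f_equal; unfold DeltaXYZ; field_simplify_eq; [nra | lra].
Qed.

Lemma center_coord_sum_nonneg_iff a b c d e ri rj rk rl :
  0 <= a -> 0 <= b -> 0 <= c -> 0 <= d -> 1 < e ->
  0 < ri -> 0 < rj -> 0 < rk -> 0 < rl ->
  let f := (a * b + c * d + a * c * e + b * d * e
            + sqrt (DeltaXYZ a d e) * sqrt (DeltaXYZ b c e)) / (e ^ 2 - 1) in
  0 <= center_coord e ri rj rk a d + center_coord e ri rj rl b c <->
  sqrt (DeltaXYZ b c e) / rk + sqrt (DeltaXYZ a d e) / rl
    <= sqrt (DeltaXYZ c d f) / ri + sqrt (DeltaXYZ a b f) / rj.
Proof.
  intros ha hb hc hd he hri hrj hrk hrl f.
  assert (Hab : sqrt (DeltaXYZ a b f)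
                = (sqrt (DeltaXYZ b c e) * (d + e * a) + sqrt (DeltaXYZ a d e) * (c + e * b))
                  / (e ^ 2 - 1)).
  { pose proof (sqrt_DeltaXYZ_flip d c b a e hd hc hb ha he) as flip; cbv zeta in flip.
    rewrite (DeltaXYZ_comm d a), (DeltaXYZ_comm c b) in flip.
    rewrite DeltaXYZ_comm, <- flip.
    unfold f; do 3 f_equal; ring. }
  unfold f; rewrite sqrt_DeltaXYZ_flip by assumption; fold f; rewrite Hab.
  unfold center_coord.
  set (A := sqrt (DeltaXYZ a d e)); set (B := sqrt (DeltaXYZ b c e)).
  set (E := e ^ 2 - 1); set (S := sqrt E).
  assert (A_pos : 0 < A) by (apply sqrt_lt_R0, DeltaXYZ_pos; lra).
  assert (B_pos : 0 < B) by (apply sqrt_lt_R0, DeltaXYZ_pos; lra).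
  assert (E_pos : 0 < E) by (unfold E; nra).
  assert (S_pos : 0 < S) by (apply sqrt_lt_R0; lra).
  assert (SS : S * S = E) by (apply sqrt_sqrt; lra).
  set (Z := (B * (a + e * d) + A * (b + e * c)) / E / ri
            + (B * (d + e * a) + A * (c + e * b)) / E / rj - (B / rk + A / rl)).
  assert (Hsum : ((a + e * d) / ri + (d + e * a) / rj - E / rk) / (S * A)
                 + ((b + e * c) / ri + (c + e * b) / rj - E / rl) / (S * B)
                 = E / (S * A * B) * Z)
    by (unfold Z; field; repeat split; lra).
  assert (K_pos : 0 < E / (S * A * B))
    by (apply Rdiv_lt_0_compat; [lra | apply Rmult_lt_0_compat; [apply Rmult_lt_0_compat |]; lra]).
  rewrite Hsum; split; intro h.
  - enough (0 <= Z) by (unfold Z in *; lra).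
    apply (Rmult_le_reg_l (E / (S * A * B))); lra.
  - apply Rmult_le_pos; [lra | unfold Z; lra].
Qed.

Theorem lemma4p9 (ni nj nk nl m : pt) (ri rj rk rl : R)
    (lki lil llj ljk lij : R) (Ok Ol : pt) :
  trunc_hinge ni nj nk nl m ->
  0 < ri -> 0 < rj -> 0 < rk -> 0 < rl ->
  perp_length nk ni lki -> perp_length ni nl lil ->
  perp_length nl nj llj -> perp_length nj nk ljk ->
  perp_length ni nj lij ->
  weighted_center Ok ni nj nk ri rj rk ->
  weighted_center Ol ni nj nl ri rj rl ->
  let p := rk in let q := ri in let r := rl in let s := rj in
  let a := cosh lki in let b := cosh lil in let c := cosh llj in
  let d := cosh ljk in let e := cosh lij in
  let f := (a * b + c * d + a * c * e + b * d * e
            + sqrt (DeltaXYZ a d e) * sqrt (DeltaXYZ b c e)) / (e ^ 2 - 1) in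
  (local_weighted_delaunay m Ok Ol <->
   sqrt (DeltaXYZ b c e) / p + sqrt (DeltaXYZ a d e) / r
     <= sqrt (DeltaXYZ c d f) / q + sqrt (DeltaXYZ a b f) / s).
Proof.
  intros Hinge hri hrj hrk hrl Pki Pil Plj Pjk Pij Wk Wl p q r s a b c d e f.
  subst p q r s f a b c d e.
  destruct Hinge as (Fk & Fl & Um & Pmi & Pmj & Sk & Sl).
  pose proof Fk as (Ui & Uj & Uk & Sij & Sik & Sji & Sjk & Ski & Skj).
  pose proof Fl as (_ & _ & Ul & _ & Sil & _ & Sjl & Sli & Slj).
  destruct (perp_length_cosh nk ni lki Uk Ui Ski Sik Pki) as [Eki a_gt1].
  destruct (perp_length_cosh ni nl lil Ui Ul Sil Sli Pil) as [Eil b_gt1].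
  destruct (perp_length_cosh nl nj llj Ul Uj Slj Sjl Plj) as [Elj c_gt1].
  destruct (perp_length_cosh nj nk ljk Uj Uk Sjk Skj Pjk) as [Ejk d_gt1].
  destruct (perp_length_cosh ni nj lij Ui Uj Sij Sji Pij) as [Eij e_gt1].
  rewrite mink_sym in Ejk, Eil.
  destruct (hinge_face_center ni nj m _ Ui Uj Um Eij e_gt1 Pmi Pmj nk Ok ri rj rk _ _
              Fk Sk Eki Ejk ltac:(lra) ltac:(lra) hri hrj hrk Wk)
    as (tk & tk_pos & Gk & Nk).
  (* f_ijl lies on the negative side of e_ij: treat it with the normal popp m *)
  assert (Sl' : line_pos_side (popp m) nl)
    by (intros x Hx; rewrite mink_popp_r; specialize (Sl x Hx); lra).
  destruct (hinge_face_center ni nj (popp m) _ Ui Uj (unit_spacelike_popp m Um) Eij e_gt1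
              ltac:(rewrite mink_popp_l, Pmi; ring) ltac:(rewrite mink_popp_l, Pmj; ring)
              nl Ol ri rj rl _ _ Fl Sl' Eil Elj ltac:(lra) ltac:(lra) hri hrj hrl Wl)
    as (tl & tl_pos & Gl & Nl).
  rewrite mink_popp_r in Gl.
  rewrite local_weighted_delaunay_iff by (destruct Wk, Wl; assumption).
  replace (mink Ol m) with (tl * - center_coord (cosh lij) ri rj rl (cosh lil) (cosh llj))
    by lra.
  rewrite Gk, (scaled_le_scaled_iff tk tl _ _ _ tk_pos tl_pos Nk) by lra.
  rewrite <- center_coord_sum_nonneg_iff by lra.
  split; intro; lra.
Qed.
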